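(* Let $R$ be a poset, $Q:=I_{<\omega}(R)$ and $\kappa:=|Q|$. Then there is a set $\mathbb{B}$ of join-semilattices with $|\mathbb{B}|\le 2^{\kappa}$ such that for every join-semilattice $P$ (with a least element), $J(Q)$ is not embeddable in $J(P)$ by a map preserving arbitrary joins if and only if no member of $\mathbb{B}$ is embeddable in $P$ as a join-semilattice.
   Context: $I_{<\omega}(R)$ is the set of finitely generated initial segments $\downarrow A$ ($A\subseteq R$ finite) of $R$, ordered by inclusion. For a join-semilattice $P$, $J(P)$ is the set of ideals (non-empty up-directed initial segments) of $P$ ordered by inclusion. Embedding as a join-semilattice means an injective map preserving binary joins. A map preserving arbitrary joins is one with $f(\bigvee X)=\bigvee f(X)$ for all subsets $X$. *)

From Stdlib Require Import List.

Record Poset := {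
  pcar :> Type;
  ple : pcar -> pcar -> Prop;
  ple_refl : forall x, ple x x;
  ple_trans : forall x y z, ple x y -> ple y z -> ple x z;
  ple_antisym : forall x y, ple x y -> ple y x -> x = y
}.

Record JSL := {
  jcar :> Type;
  jle : jcar -> jcar -> Prop;
  jle_refl : forall x, jle x x;
  jle_trans : forall x y z, jle x y -> jle y z -> jle x z;
  jle_antisym : forall x y, jle x y -> jle y x -> x = y;
  jjoin : jcar -> jcar -> jcar;
  jjoin_lub : forall x y z, jle (jjoin x y) z <-> (jle x z /\ jle y z)
}.

Definition has_least (P : JSL) : Prop := exists b : P, forall x : P, jle P b x.

Definition Ifin (R : Poset) : Type :=
  { S : R -> Prop | exists A : list R,
      forall x : R, S x <-> exists a, In a A /\ ple R x a }.

Definition Ifin_le (R : Poset) (S T : Ifin R) : Prop :=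
  forall x, proj1_sig S x -> proj1_sig T x.

Definition is_ideal {T : Type} (le : T -> T -> Prop) (X : T -> Prop) : Prop :=
  (exists x, X x) /\
  (forall x y, le x y -> X y -> X x) /\
  (forall x y, X x -> X y -> exists z, X z /\ le x z /\ le y z).

Definition Jid {T : Type} (le : T -> T -> Prop) : Type :=
  { X : T -> Prop | is_ideal le X }.

Definition Jle {T : Type} {le : T -> T -> Prop} (I K : Jid le) : Prop :=
  forall x, proj1_sig I x -> proj1_sig K x.

Definition is_lub {T : Type} (le : T -> T -> Prop) (X : T -> Prop) (s : T) : Prop :=
  (forall x, X x -> le x s) /\
  (forall u, (forall x, X x -> le x u) -> le s u).

Definition injective {A B : Type} (f : A -> B) : Prop :=
  forall x y, f x = f y -> x = y.

Definition preserves_all_joins {T1 T2 : Type}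
  (le1 : T1 -> T1 -> Prop) (le2 : T2 -> T2 -> Prop) (f : T1 -> T2) : Prop :=
  forall (X : T1 -> Prop) (s : T1), is_lub le1 X s ->
    is_lub le2 (fun y => exists x, X x /\ f x = y) (f s).

Definition jsl_embedding {B P : JSL} (g : B -> P) : Prop :=
  injective g /\ forall x y, g (jjoin B x y) = jjoin P (g x) (g y).

From Stdlib Require Import Classical ClassicalEpsilon FunctionalExtensionality
  PropExtensionality ProofIrrelevance List Arith Lia Cantor.
From mathcomp Require boolp classical_sets.

(* Write Q = I_{<omega}(R).  A map x : R -> P is separating when x r is not
   below the join of x[L] for any finite L none of whose elements is above r.
   An injective, all-joins-preserving f : J(Q) -> J(P) gives such an x
   (x r separates f of the ideal of subsets of down(r) from f of the ideal of
   sets missing up(r)), and conversely K |-> the ideal generated by x[U K] is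
   such an embedding.  A separating x induces the covering relation
   rho_x(a, M) <-> x a <= \/ x[M], and the join-semilattice T(rho) of the
   classes {M | rho(a, M) for all a in L} embeds into P along x; conversely an
   embedding of T(rho) into P, for rho reflexive and only covering a by M when
   a lies below some element of M, yields a separating map.  So B consists of
   the T(rho) for such rho.  If R is infinite, Hessenberg's |X x X| = |X|
   (from Zorn's lemma) codes pairs (a, M) by principal ideals of Q, so each rho
   is coded by a subset of Q.  Otherwise every principal down-set is finite,
   x can be replaced by a monotone separating map, for which rho_x is always
   "a lies below some element of M", and a single member suffices. *)

(** * Cardinal arithmetic from Zorn's lemma *)

Lemma zorn_premaximal (T : Type) (t0 : T) (le : T -> T -> Prop) :
  (forall t, le t t) -> (forall r s t, le r s -> le s t -> le r t) ->
  (forall C : T -> Prop, (forall s t, C s -> C t -> le s t \/ le t s) ->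
     exists u, forall s, C s -> le s u) ->
  exists m, forall s, le m s -> le s m.
Proof.
intros le_refl le_trans chain_ub.
assert (E : forall s t, boolp.asbool (le s t) = true <-> le s t).
{ intros s t. split; intro H; [exact (boolp.asboolW H)|exact (boolp.asboolT H)]. }
destruct (@classical_sets.ZL_preorder T t0 (fun s t => boolp.asbool (le s t)))
  as [m Hm].
- intro t; apply E; auto.
- intros r s t H1 H2; apply E; apply E in H1; apply E in H2; eauto.
- intros C HC. destruct (chain_ub C) as [u Hu].
  + intros s t Cs Ct. destruct (HC s t Cs Ct) as [H|H]; [left|right]; apply E; exact H.
  + exists u; intros s Cs; apply E; auto.
- exists m. intros s H. apply E, Hm, E, H.
Qed.

Lemma glue_partial_maps {I T U : Type} (u0 : U) (C : I -> Prop)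
    (D : I -> T -> Prop) (k : I -> T -> U) :
  (forall i j x, C i -> C j -> D i x -> D j x -> k i x = k j x) ->
  exists g : T -> U, forall i x, C i -> D i x -> g x = k i x.
Proof.
intro compat.
exists (fun x => epsilon (inhabits u0) (fun u => exists i, C i /\ D i x /\ k i x = u)).
intros i x Ci Dix.
destruct (epsilon_spec (inhabits u0) (fun u => exists i, C i /\ D i x /\ k i x = u))
  as [j [Cj [Djx <-]]].
- exists (k i x), i; auto.
- apply compat; auto.
Qed.

Definition injects_into {X : Type} (A B : X -> Prop) : Prop :=
  exists k : X -> X, (forall a, A a -> B (k a)) /\
    (forall a a', A a -> A a' -> k a = k a' -> a = a').

Section Comparability.
Variables (X : Type) (x0 : X) (U V : X -> Prop).

Record pinj := PInj {
  pdom : X -> Prop;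
  pmap : X -> X;
  pdom_sub : forall x, pdom x -> U x;
  pmap_into : forall x, pdom x -> V (pmap x);
  pmap_inj : forall x y, pdom x -> pdom y -> pmap x = pmap y -> x = y
}.

Definition pinj_le (p q : pinj) : Prop :=
  (forall x, pdom p x -> pdom q x) /\ (forall x, pdom p x -> pmap q x = pmap p x).

Lemma pinj_le_trans p q r : pinj_le p q -> pinj_le q r -> pinj_le p r.
Proof.
intros [dpq mpq] [dqr mqr]; split; auto.
intros x Hx; rewrite mqr, mpq; auto.
Qed.

Lemma pinj_chain_ub (C : pinj -> Prop) :
  (forall p q, C p -> C q -> pinj_le p q \/ pinj_le q p) ->
  exists u, forall p, C p -> pinj_le p u.
Proof.
intro chain.
destruct (glue_partial_maps x0 C pdom pmap) as [g Hg].
{ intros p q x Cp Cq Dp Dq.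
  destruct (chain p q Cp Cq) as [[_ E]|[_ E]]; [symmetry|]; auto. }
set (D := fun x => exists p, C p /\ pdom p x).
assert (sub : forall x, D x -> U x).
{ intros x [p [_ Dx]]; exact (pdom_sub p x Dx). }
assert (into : forall x, D x -> V (g x)).
{ intros x [p [Cp Dx]]; rewrite (Hg p x Cp Dx); exact (pmap_into p x Dx). }
assert (inj : forall x y, D x -> D y -> g x = g y -> x = y).
{ intros x y [p [Cp Dx]] [q [Cq Dy]].
  rewrite (Hg p x Cp Dx), (Hg q y Cq Dy).
  destruct (chain p q Cp Cq) as [[dpq mpq]|[dqp mqp]].
  - rewrite <- (mpq x Dx); apply (pmap_inj q); auto.
  - rewrite <- (mqp y Dy); apply (pmap_inj p); auto. }
exists (PInj D g sub into inj); intros p Cp; split; simpl.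
- intros x Dx; exists p; auto.
- intros x Dx; apply Hg; auto.
Qed.

Lemma pinj_extend (p : pinj) u v :
  U u -> ~ pdom p u -> V v -> (forall x, pdom p x -> pmap p x <> v) ->
  exists q, pinj_le p q /\ pdom q u.
Proof.
intros Uu nDu Vv fresh.
set (D := fun x => pdom p x \/ x = u).
set (k := fun x => if excluded_middle_informative (x = u) then v else pmap p x).
assert (old : forall x, pdom p x -> k x = pmap p x).
{ intros x Dx; unfold k; destruct (excluded_middle_informative (x = u)) as [->|];
    [contradiction|reflexivity]. }
assert (sub : forall x, D x -> U x).
{ intros x [Dx| ->]; [exact (pdom_sub p x Dx)|exact Uu]. }
assert (into : forall x, D x -> V (k x)).
{ intros x [Dx| ->]; [rewrite (old x Dx); exact (pmap_into p x Dx)|].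
  unfold k; destruct (excluded_middle_informative (u = u)); [exact Vv|congruence]. }
assert (inj : forall x y, D x -> D y -> k x = k y -> x = y).
{ assert (new : k u = v)
    by (unfold k; destruct (excluded_middle_informative (u = u)); congruence).
  intros x y [Dx| ->] [Dy| ->]; intro E.
  - rewrite (old x Dx), (old y Dy) in E; apply (pmap_inj p); auto.
  - rewrite new, (old x Dx) in E; destruct (fresh x Dx E).
  - rewrite new, (old y Dy) in E; destruct (fresh y Dy (eq_sym E)).
  - reflexivity. }
exists (PInj D k sub into inj); split; [split|]; simpl.
- intros x Dx; left; exact Dx.
- exact old.
- right; reflexivity.
Qed.

Lemma subset_comparable : injects_into U V \/ injects_into V U.
Proof.
assert (empty_dom : forall x, False -> U x) by contradiction.
assert (empty_into : forall x, False -> V x) by contradiction.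
assert (empty_inj : forall x y : X, False -> False -> x = y -> x = y) by auto.
destruct (zorn_premaximal pinj (PInj (fun _ => False) (fun x => x) empty_dom
            empty_into empty_inj) pinj_le) as [p maximal].
- intro p; split; auto.
- exact pinj_le_trans.
- exact pinj_chain_ub.
- destruct (classic (forall u, U u -> pdom p u)) as [total|[u Hu]%not_all_ex_not].
  { left; exists (pmap p); split.
    - intros a Ua; exact (pmap_into p a (total a Ua)).
    - intros a a' Ua Ua'; apply (pmap_inj p); auto. }
  apply imply_to_and in Hu as [Uu nDu].
  destruct (classic (forall v, V v -> exists x, pdom p x /\ pmap p x = v))
    as [onto|[v Hv]%not_all_ex_not].
  { right.
    set (inv := fun v => epsilon (inhabits x0) (fun x => pdom p x /\ pmap p x = v)).
    assert (Hinv : forall v, V v -> pdom p (inv v) /\ pmap p (inv v) = v)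
      by (intros v Vv; apply epsilon_spec, onto, Vv).
    exists inv; split.
    - intros v Vv; exact (pdom_sub p _ (proj1 (Hinv v Vv))).
    - intros v v' Vv Vv' E.
      rewrite <- (proj2 (Hinv v Vv)), <- (proj2 (Hinv v' Vv')), E; reflexivity. }
  apply imply_to_and in Hv as [Vv fresh].
  destruct (pinj_extend p u v Uu nDu Vv) as [q [pq Dqu]].
  { intros x Dx E; apply fresh; eauto. }
  destruct (maximal q pq) as [qp _].
  destruct (nDu (qp u Dqu)).
Qed.

End Comparability.

Section SquareInjection.
Variables (X : Type) (e : nat -> X).
Hypothesis e_inj : injective e.

Record packing := Packing {
  pk_set : X -> Prop;
  pk_pair : X -> X -> X;
  pk_set_e : forall n, pk_set (e n);
  pk_pair_in : forall a b, pk_set a -> pk_set b -> pk_set (pk_pair a b);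
  pk_pair_inj : forall a b c d, pk_set a -> pk_set b -> pk_set c -> pk_set d ->
    pk_pair a b = pk_pair c d -> a = c /\ b = d
}.

Definition packing_le (p q : packing) : Prop :=
  (forall x, pk_set p x -> pk_set q x) /\
  (forall a b, pk_set p a -> pk_set p b -> pk_pair q a b = pk_pair p a b).

Lemma packing_le_trans p q r : packing_le p q -> packing_le q r -> packing_le p r.
Proof.
intros [spq mpq] [sqr mqr]; split; auto.
intros a b Ha Hb; rewrite mqr, mpq; auto.
Qed.

Section NatPacking.

Let einv (x : X) : nat := epsilon (inhabits 0) (fun n => x = e n).

Let einv_e n : einv (e n) = n.
Proof.
apply e_inj, eq_sym, (epsilon_spec (inhabits 0) (fun m => e n = e m)).
exists n; reflexivity.
Qed.

Let range_e (x : X) : Prop := exists n, x = e n.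

Let nat_pair (a b : X) : X := e (Cantor.to_nat (einv a, einv b)).

Let range_e_e n : range_e (e n).
Proof. exists n; reflexivity. Qed.

Let nat_pair_in a b : range_e a -> range_e b -> range_e (nat_pair a b).
Proof. intros _ _; apply range_e_e. Qed.

Let nat_pair_inj a b c d : range_e a -> range_e b -> range_e c -> range_e d ->
  nat_pair a b = nat_pair c d -> a = c /\ b = d.
Proof.
intros [na ->] [nb ->] [nc ->] [nd ->] E.
apply e_inj in E; rewrite !einv_e in E.
apply (f_equal Cantor.of_nat) in E; rewrite !Cantor.cancel_of_to in E.
injection E as -> ->; split; reflexivity.
Qed.

Definition nat_packing : packing :=
  Packing range_e nat_pair range_e_e nat_pair_in nat_pair_inj.

End NatPacking.

Lemma packing_chain_ub (C : packing -> Prop) :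
  (forall p q, C p -> C q -> packing_le p q \/ packing_le q p) ->
  exists u, forall p, C p -> packing_le p u.
Proof.
intro chain.
destruct (classic (exists c, C c)) as [[c0 Cc0]|none].
2:{ exists nat_packing; intros p Cp; destruct (none (ex_intro _ p Cp)). }
destruct (glue_partial_maps (e 0) C
            (fun p ab => pk_set p (fst ab) /\ pk_set p (snd ab))
            (fun p ab => pk_pair p (fst ab) (snd ab))) as [g Hg].
{ intros p q [a b] Cp Cq [Hpa Hpb] [Hqa Hqb]; simpl in *.
  destruct (chain p q Cp Cq) as [[_ E]|[_ E]]; [symmetry|]; auto. }
assert (merge : forall p q, C p -> C q -> exists r, C r /\
          (forall x, pk_set p x -> pk_set r x) /\ (forall x, pk_set q x -> pk_set r x)).
{ intros p q Cp Cq; destruct (chain p q Cp Cq) as [[spq _]|[sqp _]];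
    [exists q|exists p]; auto. }
set (A := fun x => exists p, C p /\ pk_set p x).
set (f := fun a b => g (a, b)).
assert (Hf : forall p a b, C p -> pk_set p a -> pk_set p b -> f a b = pk_pair p a b).
{ intros p a b Cp Ha Hb; apply (Hg p (a, b)); simpl; auto. }
assert (A_e : forall n, A (e n)) by (intro n; exists c0; split; auto; apply pk_set_e).
assert (f_in : forall a b, A a -> A b -> A (f a b)).
{ intros a b [p [Cp Ha]] [q [Cq Hb]].
  destruct (merge p q Cp Cq) as [r [Cr [spr sqr]]].
  exists r; split; auto; rewrite (Hf r); auto; apply pk_pair_in; auto. }
assert (f_inj : forall a b c d, A a -> A b -> A c -> A d ->
          f a b = f c d -> a = c /\ b = d).
{ intros a b c d [pa [Ca Ha]] [pb [Cb Hb]] [pc [Cc Hc]] [pd [Cd Hd]].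
  destruct (merge pa pb Ca Cb) as [r1 [C1 [s1a s1b]]].
  destruct (merge pc pd Cc Cd) as [r2 [C2 [s2c s2d]]].
  destruct (merge r1 r2 C1 C2) as [r [Cr [s1 s2]]].
  rewrite (Hf r a b), (Hf r c d); auto.
  apply pk_pair_inj; auto. }
exists (Packing A f A_e f_in f_inj); intros p Cp; split; simpl.
- intros x Hx; exists p; auto.
- intros a b Ha Hb; apply Hf; auto.
Qed.

Section Extend.
Variables (p : packing) (k : X -> X).
Hypothesis k_out : forall a, pk_set p a -> ~ pk_set p (k a).
Hypothesis k_inj : forall a a', pk_set p a -> pk_set p a' -> k a = k a' -> a = a'.

Let A := pk_set p.
Let f := pk_pair p.

Let is_new (z : X) : bool := if excluded_middle_informative (A z) then false else true.
Let base (z : X) : X :=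
  if excluded_middle_informative (A z) then z
  else epsilon (inhabits z) (fun a => A a /\ k a = z).
Let lift (t : bool) (a : X) : X := if t then k a else a.
Let A' (z : X) : Prop := A z \/ exists a, A a /\ z = k a.

Let is_new_old z : A z -> is_new z = false.
Proof. unfold is_new; destruct (excluded_middle_informative (A z)); tauto. Qed.

Let old_of_not_new z : is_new z = false -> A z.
Proof. unfold is_new; destruct (excluded_middle_informative (A z)); easy. Qed.

Let base_spec z : A' z -> A (base z) /\ z = lift (is_new z) (base z).
Proof.
unfold base, lift, is_new; intros [Hz|[a [Ha ->]]].
- destruct (excluded_middle_informative (A z)); tauto.
- destruct (excluded_middle_informative (A (k a))) as [Hk|_].
  + destruct (k_out a Ha Hk).
  + destruct (epsilon_spec (inhabits (k a)) (fun a' => A a' /\ k a' = k a))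
      as [Ha' E]; eauto.
Qed.

(* Pairs with a new coordinate are sent into the fresh part [k(A)], coding the two
   base points and the two tags; pairs from [A] keep their old value. *)
Let f' (a b : X) : X :=
  if orb (is_new a) (is_new b)
  then k (f (f (base a) (base b)) (f (e (Nat.b2n (is_new a))) (e (Nat.b2n (is_new b)))))
  else f a b.

Let A'_e n : A' (e n).
Proof. left; apply pk_set_e. Qed.

Let f'_old a b : A a -> A b -> f' a b = f a b.
Proof. intros Ha Hb; unfold f'; rewrite (is_new_old a Ha), (is_new_old b Hb); reflexivity. Qed.

Let f_code_in a b : A' a -> A' b ->
  A (f (f (base a) (base b)) (f (e (Nat.b2n (is_new a))) (e (Nat.b2n (is_new b))))).
Proof.
intros Ha Hb; destruct (base_spec a Ha), (base_spec b Hb).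
apply pk_pair_in; apply pk_pair_in; auto; apply pk_set_e.
Qed.

Let f'_in a b : A' a -> A' b -> A' (f' a b).
Proof.
intros Ha Hb; unfold f'.
destruct (orb (is_new a) (is_new b)) eqn:N.
- right; eexists; split; [|reflexivity]; apply f_code_in; auto.
- apply Bool.orb_false_iff in N as [Na Nb].
  left; apply pk_pair_in; apply old_of_not_new; auto.
Qed.

Let f'_inj a b c d : A' a -> A' b -> A' c -> A' d ->
  f' a b = f' c d -> a = c /\ b = d.
Proof.
intros Ha Hb Hc Hd; unfold f'.
destruct (orb (is_new a) (is_new b)) eqn:Nab, (orb (is_new c) (is_new d)) eqn:Ncd; intro E.
- apply k_inj in E; try apply f_code_in; auto.
  destruct (base_spec a Ha) as [Ba Ra], (base_spec b Hb) as [Bb Rb],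
    (base_spec c Hc) as [Bc Rc], (base_spec d Hd) as [Bd Rd].
  apply pk_pair_inj in E as [E1 E2]; try apply pk_pair_in; auto; try apply pk_set_e.
  apply pk_pair_inj in E1 as [Ea Eb]; auto.
  apply pk_pair_inj in E2 as [Ta Tb]; try apply pk_set_e.
  apply e_inj, Nat.b2n_inj in Ta; apply e_inj, Nat.b2n_inj in Tb.
  rewrite Ra, Rb, Rc, Rd, Ea, Eb, Ta, Tb; split; reflexivity.
- apply Bool.orb_false_iff in Ncd as [Nc Nd].
  exfalso; apply (k_out _ (f_code_in a b Ha Hb)); rewrite E.
  apply pk_pair_in; apply old_of_not_new; auto.
- apply Bool.orb_false_iff in Nab as [Na Nb].
  exfalso; apply (k_out _ (f_code_in c d Hc Hd)); rewrite <- E.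
  apply pk_pair_in; apply old_of_not_new; auto.
- apply Bool.orb_false_iff in Nab as [Na Nb], Ncd as [Nc Nd].
  apply (pk_pair_inj p); auto; apply old_of_not_new; auto.
Qed.

Lemma packing_extend : exists q, packing_le p q /\ ~ packing_le q p.
Proof.
exists (Packing A' f' A'_e f'_in f'_inj); split; [split|]; simpl.
- intros x Hx; left; exact Hx.
- exact f'_old.
- intros [sub _].
  apply (k_out (e 0) (pk_set_e p 0)), sub.
  right; exists (e 0); split; [apply pk_set_e|reflexivity].
Qed.

End Extend.

Lemma packing_absorb (p : packing) (k : X -> X) :
  (forall x, ~ pk_set p x -> pk_set p (k x)) ->
  (forall x y, ~ pk_set p x -> ~ pk_set p y -> k x = k y -> x = y) ->
  exists h : X -> X -> X, forall a b c d, h a b = h c d -> a = c /\ b = d.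
Proof.
intros k_in k_inj.
set (A := pk_set p); set (f := pk_pair p).
(* [j] injects [X = A ∪ ¬A] into [A], tagging the two halves with [e 0] and [e 1]. *)
set (j := fun x => if excluded_middle_informative (A x) then f x (e 0) else f (k x) (e 1)).
assert (j_in : forall x, A (j x)).
{ intro x; unfold j; destruct (excluded_middle_informative (A x));
    apply pk_pair_in; auto; apply pk_set_e. }
assert (j_inj : forall x y, j x = j y -> x = y).
{ intros x y; unfold j.
  destruct (excluded_middle_informative (A x)) as [Ax|Ax],
    (excluded_middle_informative (A y)) as [Ay|Ay]; intro E.
  - exact (proj1 (pk_pair_inj p _ _ _ _ Ax (pk_set_e p 0) Ay (pk_set_e p 0) E)).
  - apply (pk_pair_inj p _ _ _ _ Ax (pk_set_e p 0) (k_in y Ay) (pk_set_e p 1)) in E.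
    destruct E as [_ E]; apply e_inj in E; discriminate.
  - apply (pk_pair_inj p _ _ _ _ (k_in x Ax) (pk_set_e p 1) Ay (pk_set_e p 0)) in E.
    destruct E as [_ E]; apply e_inj in E; discriminate.
  - apply (pk_pair_inj p _ _ _ _ (k_in x Ax) (pk_set_e p 1) (k_in y Ay) (pk_set_e p 1)) in E.
    exact (k_inj x y Ax Ay (proj1 E)). }
exists (fun a b => f (j a) (j b)); intros a b c d E.
destruct (pk_pair_inj p _ _ _ _ (j_in a) (j_in b) (j_in c) (j_in d) E).
split; apply j_inj; auto.
Qed.

Theorem square_injection :
  exists h : X -> X -> X, forall a b c d, h a b = h c d -> a = c /\ b = d.
Proof.
destruct (zorn_premaximal packing nat_packing packing_le) as [p maximal].
- intro p; split; auto.
- exact packing_le_trans.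
- exact packing_chain_ub.
- destruct (subset_comparable X (e 0) (pk_set p) (fun x => ~ pk_set p x))
    as [[k [k_out k_inj]]|[k [k_in k_inj]]].
  + destruct (packing_extend p k k_out k_inj) as [q [pq not_qp]].
    destruct (not_qp (maximal q pq)).
  + exact (packing_absorb p k k_in k_inj).
Qed.

Corollary list_injection : exists c : list X -> X, injective c.
Proof.
destruct square_injection as [h Hh].
exists (fix c L := match L with nil => h (e 0) (e 0) | a :: L' => h (e 1) (h a (c L')) end).
intro L; induction L as [|a L IH]; intros [|a' M] E.
- reflexivity.
- apply Hh in E as [E _]; apply e_inj in E; discriminate.
- apply Hh in E as [E _]; apply e_inj in E; discriminate.
- apply Hh in E as [_ E]; apply Hh in E as [-> E]; rewrite (IH M E); reflexivity.
Qed.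

End SquareInjection.

Lemma unlisted_nat_injection {T : Type} (S : T -> Prop) :
  ~ (exists L, forall x, S x <-> In x L) -> exists e : nat -> T, injective e.
Proof.
intro unlisted.
assert (fresh : forall L, {x | S x /\ ~ In x L}).
{ intro L; apply constructive_indefinite_description, NNPP; intro none.
  apply unlisted.
  exists (filter (fun x => if excluded_middle_informative (S x) then true else false) L).
  intro x; rewrite filter_In.
  destruct (excluded_middle_informative (S x)) as [Sx|nSx]; split; try tauto.
  - intros _; split; auto; apply NNPP; intro nIn; apply none; eauto.
  - intros [_ F]; discriminate. }
set (pick := fun L => proj1_sig (fresh L)).
set (prefix := fix prefix n := match n with 0 => nil | S m => pick (prefix m) :: prefix m end).
assert (in_prefix : forall m n, m < n -> In (pick (prefix m)) (prefix n)).
{ intros m n; induction n as [|n IH]; intro Hmn; [inversion Hmn|].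
  simpl; destruct (Nat.eq_dec m n) as [->|Hne]; [left; reflexivity|right; apply IH; lia]. }
assert (not_in_prefix : forall n, ~ In (pick (prefix n)) (prefix n))
  by (intro n; exact (proj2 (proj2_sig (fresh (prefix n))))).
exists (fun n => pick (prefix n)); intros m n E.
destruct (Nat.lt_trichotomy m n) as [Hl|[Hl|Hl]]; auto.
- destruct (not_in_prefix n); rewrite <- E; apply in_prefix; exact Hl.
- destruct (not_in_prefix m); rewrite E; apply in_prefix; exact Hl.
Qed.

(** * Ideals *)

Lemma Jid_ext {T : Type} {le : T -> T -> Prop} (I K : Jid le) :
  (forall x, proj1_sig I x <-> proj1_sig K x) -> I = K.
Proof.
destruct I as [I HI], K as [K HK]; simpl; intro H.
assert (E : I = K)
  by (apply functional_extensionality; intro x; apply propositional_extensionality; auto).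
subst K; f_equal; apply proof_irrelevance.
Qed.

Lemma Jid_lub_unique {T : Type} {le : T -> T -> Prop} (X : Jid le -> Prop) s s' :
  is_lub Jle X s -> is_lub Jle X s' -> s = s'.
Proof.
intros [ub lub] [ub' lub']; apply Jid_ext; intro x; split; intro Hx.
- exact (lub s' ub' x Hx).
- exact (lub' s ub x Hx).
Qed.

Lemma preserves_all_joins_monotone {T1 T2 : Type} {le1 : T1 -> T1 -> Prop}
    {le2 : T2 -> T2 -> Prop} (f : Jid le1 -> Jid le2) :
  preserves_all_joins Jle Jle f -> forall K K', Jle K K' -> Jle (f K) (f K').
Proof.
intros Hf K K' HK.
assert (lub2 : is_lub Jle (fun y => y = K \/ y = K') K').
{ split.
  - intros y [-> | ->]; [exact HK|intros x Hx; exact Hx].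
  - intros u Hu; apply Hu; right; reflexivity. }
apply (proj1 (Hf _ _ lub2)); exists K; split; auto.
Qed.

Section FinitelyGeneratedIdeals.
Variable R : Poset.

Definition down_list (L : list R) : Ifin R :=
  exist _ (fun x => exists a, In a L /\ ple R x a) (ex_intro _ L (fun x => iff_refl _)).

Lemma Ifin_down (q : Ifin R) x y : proj1_sig q x -> ple R y x -> proj1_sig q y.
Proof.
destruct q as [S [A HA]]; simpl; intros Hx Hyx.
apply HA in Hx as [a [Ia Hxa]]; apply HA; exists a; split; auto.
exact (ple_trans R _ _ _ Hyx Hxa).
Qed.

Lemma Ifin_union (q1 q2 : Ifin R) :
  exists q : Ifin R, forall x, proj1_sig q x <-> proj1_sig q1 x \/ proj1_sig q2 x.
Proof.
destruct q1 as [S1 [A1 H1]], q2 as [S2 [A2 H2]]; simpl.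
exists (down_list (A1 ++ A2)); intro x; simpl; rewrite H1, H2; split.
- intros [a [Ia Hxa]]; apply in_app_or in Ia as [Ia|Ia]; [left|right]; eauto.
- intros [[a [Ia Hxa]]|[a [Ia Hxa]]]; exists a; split; auto; apply in_or_app; auto.
Qed.

Lemma Ifin_below_ideal (S : R -> Prop) :
  is_ideal (Ifin_le R) (fun q => forall x, proj1_sig q x -> S x).
Proof.
split; [|split].
- exists (down_list nil); intros x [a [[] _]].
- intros q q' Hqq' Hq' x Hx; apply Hq', Hqq', Hx.
- intros q1 q2 H1 H2; destruct (Ifin_union q1 q2) as [q Hq].
  exists q; split; [|split].
  + intros x Hx; apply Hq in Hx as [Hx|Hx]; auto.
  + intros x Hx; apply Hq; auto.
  + intros x Hx; apply Hq; auto.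
Qed.

Definition Ifin_below (S : R -> Prop) : Jid (Ifin_le R) :=
  exist _ _ (Ifin_below_ideal S).

Definition Jid_points (K : Jid (Ifin_le R)) (x : R) : Prop :=
  exists q, proj1_sig K q /\ proj1_sig q x.

Lemma Jid_points_sub (K : Jid (Ifin_le R)) (q : Ifin R) :
  (forall x, proj1_sig q x -> Jid_points K x) -> proj1_sig K q.
Proof.
destruct K as [K [[q0 Kq0] [K_down K_dir]]]; unfold Jid_points; simpl.
destruct q as [S [A HA]]; simpl; intro cover.
assert (gen : forall L, (forall a, In a L -> exists q, K q /\ proj1_sig q a) ->
          exists q, K q /\ forall a, In a L -> proj1_sig q a).
{ induction L as [|a L IH]; intro HL.
  - exists q0; split; [exact Kq0|intros a []].
  - destruct (HL a (or_introl eq_refl)) as [q1 [Kq1 Hq1]].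
    destruct IH as [q2 [Kq2 Hq2]]; [intros a' Ia'; apply HL; right; exact Ia'|].
    destruct (K_dir q1 q2 Kq1 Kq2) as [q [Kq [l1 l2]]].
    exists q; split; [exact Kq|]; intros a' [<-|Ia']; [apply l1|apply l2, Hq2]; auto. }
destruct (gen A) as [q [Kq Hq]].
{ intros a Ia; apply cover, HA; exists a; split; [exact Ia|apply ple_refl]. }
apply (K_down _ q); [|exact Kq].
intros x Hx; apply HA in Hx as [a [Ia Hxa]]; exact (Ifin_down q a x (Hq a Ia) Hxa).
Qed.

Definition Jid_join (X : Jid (Ifin_le R) -> Prop) : Jid (Ifin_le R) :=
  Ifin_below (fun x => exists K, X K /\ Jid_points K x).

Lemma Jid_join_lub (X : Jid (Ifin_le R) -> Prop) : is_lub Jle X (Jid_join X).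
Proof.
split.
- intros K XK q Kq x Hx; exists K; split; [exact XK|exists q; auto].
- intros U ub q Hq; apply Jid_points_sub; intros x Hx.
  destruct (Hq x Hx) as [K [XK [q' [Kq' Hq']]]].
  exists q'; split; [exact (ub K XK q' Kq')|exact Hq'].
Qed.

End FinitelyGeneratedIdeals.

Section FiniteJoins.
Variables (P : JSL) (b : P).
Hypothesis b_least : forall y, jle P b y.

Lemma jle_joinl u v : jle P u (jjoin P u v).
Proof. exact (proj1 (proj1 (jjoin_lub P u v _) (jle_refl P _))). Qed.

Lemma jle_joinr u v : jle P v (jjoin P u v).
Proof. exact (proj2 (proj1 (jjoin_lub P u v _) (jle_refl P _))). Qed.

Definition jL {A : Type} (x : A -> P) (L : list A) : P :=
  fold_right (fun a acc => jjoin P (x a) acc) b L.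

Lemma jL_le {A : Type} (x : A -> P) L z :
  jle P (jL x L) z <-> forall a, In a L -> jle P (x a) z.
Proof.
induction L as [|a L IH]; simpl.
- split; [intros _ a []|intros _; apply b_least].
- rewrite jjoin_lub, IH; split.
  + intros [Ha HL] a' [<-|Ia']; auto.
  + intro H; split; auto.
Qed.

Lemma jL_in {A : Type} (x : A -> P) L a : In a L -> jle P (x a) (jL x L).
Proof. intro Ia; exact (proj1 (jL_le x L _) (jle_refl P _) a Ia). Qed.

Lemma jL_app {A : Type} (x : A -> P) L M :
  jle P (jL x L) (jL x (L ++ M)) /\ jle P (jL x M) (jL x (L ++ M)).
Proof. split; apply jL_le; intros a Ia; apply jL_in, in_or_app; auto. Qed.

Lemma Jid_bottom (U : Jid (jle P)) : proj1_sig U b.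
Proof. destruct U as [S HS]; simpl; destruct HS as [[y Sy] [S_down _]]; exact (S_down b y (b_least y) Sy). Qed.

Lemma Jid_down (U : Jid (jle P)) u v : jle P u v -> proj1_sig U v -> proj1_sig U u.
Proof. destruct U as [S HS]; simpl; destruct HS as [_ [S_down _]]; exact (S_down u v). Qed.

Lemma Jid_jjoin (U : Jid (jle P)) u v :
  proj1_sig U u -> proj1_sig U v -> proj1_sig U (jjoin P u v).
Proof.
destruct U as [S HS]; simpl; destruct HS as [_ [S_down S_dir]]; intros Su Sv.
destruct (S_dir u v Su Sv) as [z [Sz [uz vz]]].
apply (S_down _ z); [apply jjoin_lub; auto|exact Sz].
Qed.

Lemma Jid_jL {A : Type} (U : Jid (jle P)) (x : A -> P) L :
  (forall a, In a L -> proj1_sig U (x a)) -> proj1_sig U (jL x L).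
Proof.
induction L as [|a L IH]; simpl; intro H.
- apply Jid_bottom.
- apply Jid_jjoin; auto.
Qed.

End FiniteJoins.

(** * Join-preserving embeddings of J(I_{<omega}(R)) *)

Lemma join_embedding_reflects_le (R : Poset) {T : Type} {le : T -> T -> Prop}
    (f : Jid (Ifin_le R) -> Jid le) :
  injective f -> preserves_all_joins Jle Jle f ->
  forall K K', Jle (f K) (f K') -> Jle K K'.
Proof.
intros f_inj f_joins K K' fKK'.
set (X := fun y => y = K \/ y = K').
assert (lub' : is_lub Jle (fun y => exists z, X z /\ f z = y) (f K')).
{ split.
  - intros y [z [[-> | ->] <-]]; [exact fKK'|intros p Hp; exact Hp].
  - intros u ub; apply ub; exists K'; split; [right|]; reflexivity. }
assert (E : Jid_join R X = K').
{ apply f_inj, (Jid_lub_unique _ _ _ (f_joins X _ (Jid_join_lub R X)) lub'). }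
rewrite <- E; apply (proj1 (Jid_join_lub R X)); left; reflexivity.
Qed.

Section SeparatingMaps.
Variables (R : Poset) (P : JSL) (b : P).
Hypothesis b_least : forall y, jle P b y.

Definition separating (x : R -> P) : Prop :=
  forall r L, (forall s, In s L -> ~ ple R r s) -> ~ jle P (x r) (jL P b x L).

Section IdealImage.
Variable x : R -> P.
Hypothesis x_sep : separating x.

Definition image_generated (K : Jid (Ifin_le R)) (p : P) : Prop :=
  exists L, (forall a, In a L -> Jid_points R K a) /\ jle P p (jL P b x L).

Lemma image_generated_ideal K : is_ideal (jle P) (image_generated K).
Proof.
split; [|split].
- exists b, nil; split; [intros a []|apply jle_refl].
- intros p p' pp' [L [HL Hp']]; exists L; split; [exact HL|exact (jle_trans P _ _ _ pp' Hp')].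
- intros p1 p2 [L1 [H1 l1]] [L2 [H2 l2]].
  destruct (jL_app P b b_least x L1 L2) as [s1 s2].
  exists (jL P b x (L1 ++ L2)); split; [|split].
  + exists (L1 ++ L2); split; [|apply jle_refl].
    intros a Ia; apply in_app_or in Ia as [Ia|Ia]; auto.
  + exact (jle_trans P _ _ _ l1 s1).
  + exact (jle_trans P _ _ _ l2 s2).
Qed.

Definition ideal_image (K : Jid (Ifin_le R)) : Jid (jle P) :=
  exist _ _ (image_generated_ideal K).

Lemma ideal_image_point (K : Jid (Ifin_le R)) a :
  Jid_points R K a -> proj1_sig (ideal_image K) (x a).
Proof.
intro Ha; exists (a :: nil); split.
- intros a' [<-|[]]; exact Ha.
- apply (jL_in P b b_least); left; reflexivity.
Qed.

Lemma ideal_image_monotone K K' : Jle K K' -> Jle (ideal_image K) (ideal_image K').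
Proof.
intros KK' p [L [HL Hp]]; exists L; split; [|exact Hp].
intros a Ia; destruct (HL a Ia) as [q [Kq Hq]]; exists q; split; [apply KK'|]; auto.
Qed.

Lemma ideal_image_reflects K K' : Jle (ideal_image K) (ideal_image K') -> Jle K K'.
Proof.
intros le_image q Kq; apply Jid_points_sub; intros a Ha.
destruct (le_image _ (ideal_image_point K a (ex_intro _ q (conj Kq Ha))))
  as [L [HL Ha_le]].
destruct (classic (exists s, In s L /\ ple R a s)) as [[s [Is a_s]]|none].
- destruct (HL s Is) as [q' [Kq' Hq']].
  exists q'; split; [exact Kq'|exact (Ifin_down R q' s a Hq' a_s)].
- destruct (x_sep a L (fun s Is a_s => none (ex_intro _ s (conj Is a_s))) Ha_le).
Qed.

Lemma ideal_image_injective : injective ideal_image.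
Proof.
intros K K' E; apply Jid_ext; intro q; split; apply ideal_image_reflects;
  rewrite E; intros p Hp; exact Hp.
Qed.

Lemma ideal_image_preserves_joins : preserves_all_joins Jle Jle ideal_image.
Proof.
intros X s [ub lub]; split.
- intros y [K [XK <-]]; apply ideal_image_monotone, ub, XK.
- intros U U_ub p [L [HL Hp]]; apply (Jid_down P U _ _ Hp), (Jid_jL P b b_least).
  intros a Ia; destruct (HL a Ia) as [q [sq Hq]].
  destruct (lub _ (proj1 (Jid_join_lub R X)) q sq a Hq) as [K [XK Ka]].
  apply (U_ub (ideal_image K)); [exists K; auto|exact (ideal_image_point K a Ka)].
Qed.

End IdealImage.

Lemma separating_of_join_embedding (f : Jid (Ifin_le R) -> Jid (jle P)) :
  injective f -> preserves_all_joins Jle Jle f -> exists x, separating x.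
Proof.
intros f_inj f_joins.
set (below r := Ifin_below R (fun y => ple R y r)).
set (avoiding r := Ifin_below R (fun y => ~ ple R r y)).
assert (witness : forall r, exists p, proj1_sig (f (below r)) p /\
                                      ~ proj1_sig (f (avoiding r)) p).
{ intro r; apply NNPP; intro none.
  assert (le_r : Jle (below r) (avoiding r)).
  { apply (join_embedding_reflects_le R f f_inj f_joins); intros p Hp.
    apply NNPP; intro Hn; apply none; eauto. }
  apply (le_r (down_list R (r :: nil))) with r.
  - intros y [a [[<-|[]] y_r]]; exact y_r.
  - exists r; split; [left; reflexivity|apply ple_refl].
  - apply ple_refl. }
set (x r := proj1_sig (constructive_indefinite_description _ (witness r))).
assert (Hx : forall r, proj1_sig (f (below r)) (x r) /\ ~ proj1_sig (f (avoiding r)) (x r))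
  by (intro r; exact (proj2_sig (constructive_indefinite_description _ (witness r)))).
exists x; intros r L HL Hle.
apply (proj2 (Hx r)), (Jid_down P _ _ _ Hle), (Jid_jL P b b_least).
intros s Is; apply (preserves_all_joins_monotone f f_joins (below s)); [|apply Hx].
intros q Hq y Hy r_y; exact (HL s Is (ple_trans R _ _ _ r_y (Hq y Hy))).
Qed.

Lemma join_embedding_iff_separating :
  (exists f : Jid (Ifin_le R) -> Jid (jle P), injective f /\ preserves_all_joins Jle Jle f)
  <-> exists x, separating x.
Proof.
split.
- intros [f [f_inj f_joins]]; exact (separating_of_join_embedding f f_inj f_joins).
- intros [x x_sep]; exists (ideal_image x); split.
  + exact (ideal_image_injective x x_sep).
  + exact (ideal_image_preserves_joins x).
Qed.

End SeparatingMaps.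

(** * Covering semilattices *)

Lemma jjoin_eq_iff_le (J : JSL) (u v : J) : jle J u v <-> jjoin J u v = v.
Proof.
split.
- intro uv; apply jle_antisym; [apply jjoin_lub; split; [exact uv|apply jle_refl]|].
  apply jle_joinr.
- intro E; rewrite <- E; apply jle_joinl.
Qed.

Lemma jsl_embedding_le_iff (B P : JSL) (g : B -> P) :
  jsl_embedding g -> forall u v, jle B u v <-> jle P (g u) (g v).
Proof.
intros [g_inj g_join] u v; rewrite !jjoin_eq_iff_le, <- g_join; split.
- intro E; rewrite E; reflexivity.
- apply g_inj.
Qed.

Section CoverJSL.
Context {A : Type} (rho : A -> list A -> Prop).

Definition covered_by (L M : list A) : Prop := forall a, In a L -> rho a M.

Definition cover_class : Type :=
  { S : list A -> Prop | exists L, forall M, S M <-> covered_by L M }.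

Definition cover_le (S S' : cover_class) : Prop :=
  forall M, proj1_sig S' M -> proj1_sig S M.

Lemma cover_class_ext (S S' : cover_class) :
  (forall M, proj1_sig S M <-> proj1_sig S' M) -> S = S'.
Proof.
destruct S as [S HS], S' as [S' HS']; simpl; intro H.
assert (E : S = S')
  by (apply functional_extensionality; intro M; apply propositional_extensionality; auto).
subst S'; f_equal; apply proof_irrelevance.
Qed.

Lemma cover_meet_generated (S S' : cover_class) :
  exists L, forall M, (proj1_sig S M /\ proj1_sig S' M) <-> covered_by L M.
Proof.
destruct S as [S [L HL]], S' as [S' [L' HL']]; simpl.
exists (L ++ L'); intro M; rewrite HL, HL'; split.
- intros [H H'] a Ia; apply in_app_or in Ia as [Ia|Ia]; auto.
- intro H; split; intros a Ia; apply H, in_or_app; auto.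
Qed.

Definition cover_join (S S' : cover_class) : cover_class :=
  exist _ _ (cover_meet_generated S S').

Definition cover_jsl : JSL.
Proof.
refine (Build_JSL cover_class cover_le _ _ _ cover_join _).
- intros S M H; exact H.
- intros S S' S'' H1 H2 M H; exact (H1 M (H2 M H)).
- intros S S' H1 H2; apply cover_class_ext; intro M; split; [apply H2|apply H1].
- intros S S' S''; unfold cover_le; simpl; split.
  + intro H; split; intros M HM; apply (H M HM).
  + intros [H1 H2] M HM; split; auto.
Defined.

Definition cover_of (L : list A) : cover_jsl :=
  exist _ (covered_by L) (ex_intro _ L (fun M => iff_refl _)).

Section Realization.
Variables (P : JSL) (b : P) (x : A -> P).
Hypothesis b_least : forall y, jle P b y.
Hypothesis rho_x : forall a M, rho a M <-> jle P (x a) (jL P b x M).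

Definition generators (S : cover_jsl) : list A :=
  proj1_sig (constructive_indefinite_description _ (proj2_sig S)).

Definition realize (S : cover_jsl) : P := jL P b x (generators S).

Lemma realize_le_iff (S : cover_jsl) M :
  proj1_sig S M <-> jle P (realize S) (jL P b x M).
Proof.
unfold realize, generators.
destruct (constructive_indefinite_description _ (proj2_sig S)) as [L HL]; simpl.
rewrite HL, (jL_le P b b_least); unfold covered_by; split; intros H a Ia; apply rho_x; auto.
Qed.

Lemma realize_embedding : jsl_embedding realize.
Proof.
split.
- intros S S' E; apply cover_class_ext; intro M; rewrite !realize_le_iff, E; tauto.
- intros S S'; apply (jle_antisym P).
  + set (M := generators S ++ generators S').
    assert (S_M : proj1_sig S M /\ proj1_sig S' M).
    { destruct (jL_app P b b_least x (generators S) (generators S')) as [s1 s2].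
      split; apply realize_le_iff; assumption. }
    apply (jle_trans P _ (jL P b x M)); [apply realize_le_iff; exact S_M|].
    apply (jL_le P b b_least); intros a Ia; apply in_app_or in Ia as [Ia|Ia].
    * apply (jle_trans P _ (realize S)); [apply (jL_in P b b_least); exact Ia|apply jle_joinl].
    * apply (jle_trans P _ (realize S')); [apply (jL_in P b b_least); exact Ia|apply jle_joinr].
  + assert (top : proj1_sig (cover_join S S') (generators (cover_join S S')))
      by (apply realize_le_iff, jle_refl).
    destruct top as [H1 H2]; apply jjoin_lub; split; apply realize_le_iff; assumption.
Qed.

End Realization.

End CoverJSL.

Definition admissible_cover (R : Poset) (rho : R -> list R -> Prop) : Prop :=
  (forall a L, In a L -> rho a L) /\
  (forall r L, rho r L -> exists s, In s L /\ ple R r s).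

Lemma separating_of_cover_embedding (R : Poset) (P : JSL) (b : P)
    (rho : R -> list R -> Prop) :
  (forall y, jle P b y) -> admissible_cover R rho ->
  (exists g : cover_jsl rho -> P, jsl_embedding g) -> exists x, separating R P b x.
Proof.
intros b_least [rho_in rho_sound] [g g_emb].
exists (fun r => g (cover_of rho (r :: nil))); intros r L HL Hle.
assert (le_L : jle P (g (cover_of rho (r :: nil))) (g (cover_of rho L))).
{ apply (jle_trans P _ _ _ Hle), (jL_le P b b_least); intros s Is.
  apply (jsl_embedding_le_iff _ _ g g_emb); intros M HM a [<-|[]]; apply HM, Is. }
apply (jsl_embedding_le_iff _ _ g g_emb) in le_L.
destruct (rho_sound r L (le_L L (fun a Ia => rho_in a L Ia) r (or_introl eq_refl)))
  as [s [Is r_s]].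
exact (HL s Is r_s).
Qed.

(** * Coding covering relations by subsets of I_{<omega}(R) *)

Lemma admissible_join_cover (R : Poset) (P : JSL) (b : P) (x : R -> P) :
  (forall y, jle P b y) -> separating R P b x ->
  admissible_cover R (fun a M => jle P (x a) (jL P b x M)).
Proof.
intros b_least x_sep; split.
- intros a L Ia; exact (jL_in P b b_least x L a Ia).
- intros r L Hle; apply NNPP; intro none.
  exact (x_sep r L (fun s Is r_s => none (ex_intro _ s (conj Is r_s))) Hle).
Qed.

Definition below_some (R : Poset) (a : R) (M : list R) : Prop :=
  exists s, In s M /\ ple R a s.

Section MonotoneHull.
Variables (R : Poset) (P : JSL) (b : P) (x : R -> P).
Hypothesis b_least : forall y, jle P b y.
Hypothesis x_sep : separating R P b x.
Variable down : R -> list R.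
Hypothesis down_spec : forall r s, In s (down r) <-> ple R s r.

Definition monotone_hull (r : R) : P := jL P b x (down r).

Lemma monotone_hull_le_iff a M :
  jle P (monotone_hull a) (jL P b monotone_hull M) <-> below_some R a M.
Proof.
split.
- intro Hle; set (L := concat (map down M)).
  assert (xa_L : jle P (x a) (jL P b x L)).
  { apply (jle_trans P _ (monotone_hull a)).
    { apply (jL_in P b b_least), down_spec, ple_refl. }
    apply (jle_trans P _ _ _ Hle), (jL_le P b b_least); intros s Is.
    apply (jL_le P b b_least); intros t It; apply (jL_in P b b_least).
    apply in_concat; exists (down s); split; [apply in_map|]; assumption. }
  apply NNPP; intro none; apply (x_sep a L); [|exact xa_L].
  intros t It a_t; apply in_concat in It as [l [Il It]].
  apply in_map_iff in Il as [s [<- Is]]; apply down_spec in It.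
  apply none; exists s; split; [exact Is|exact (ple_trans R _ _ _ a_t It)].
- intros [s [Is a_s]]; apply (jle_trans P _ (monotone_hull s)).
  + apply (jL_le P b b_least); intros t It; apply (jL_in P b b_least), down_spec.
    apply down_spec in It; exact (ple_trans R _ _ _ It a_s).
  + exact (jL_in P b b_least _ M s Is).
Qed.

End MonotoneHull.

Definition cover_family (R : Poset) (I : Type) (rel : I -> R -> list R -> Prop) : Prop :=
  (forall i, admissible_cover R (rel i)) /\
  forall (P : JSL) (b : P), (forall y, jle P b y) ->
    forall x, separating R P b x ->
      exists i x', forall a M, rel i a M <-> jle P (x' a) (jL P b x' M).

Lemma locally_finite_cover_family (R : Poset) :
  (forall r, exists L, forall s, ple R s r <-> In s L) ->
  cover_family R unit (fun _ => below_some R).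
Proof.
intro listable.
set (down r := proj1_sig (constructive_indefinite_description _ (listable r))).
assert (down_spec : forall r s, In s (down r) <-> ple R s r).
{ intros r s; symmetry; exact (proj2_sig (constructive_indefinite_description _ (listable r)) s). }
split.
- intros _; split.
  + intros a L Ia; exists a; split; [exact Ia|apply ple_refl].
  + intros r L H; exact H.
- intros P b b_least x x_sep; exists tt, (monotone_hull R P b x down); intros a M.
  symmetry; exact (monotone_hull_le_iff R P b x b_least x_sep down down_spec a M).
Qed.

Lemma down_list_single_inj (R : Poset) (u v : R) :
  down_list R (u :: nil) = down_list R (v :: nil) -> u = v.
Proof.
intro E.
assert (u_v : proj1_sig (down_list R (v :: nil)) u)
  by (rewrite <- E; exists u; split; [left; reflexivity|apply ple_refl]).
assert (v_u : proj1_sig (down_list R (u :: nil)) v)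
  by (rewrite E; exists v; split; [left; reflexivity|apply ple_refl]).
destruct u_v as [a [[<-|[]] u_a]], v_u as [a' [[<-|[]] v_a']].
exact (ple_antisym R _ _ u_a v_a').
Qed.

Lemma infinite_cover_family (R : Poset) (e : nat -> R) :
  injective e ->
  exists (I : Type) (idx : I -> (Ifin R -> Prop)) (rel : I -> R -> list R -> Prop),
    injective idx /\ cover_family R I rel.
Proof.
intro e_inj.
destruct (list_injection R e e_inj) as [c c_inj].
set (code a M := down_list R (c (a :: M) :: nil)).
assert (code_inj : forall a M a' M', code a M = code a' M' -> a = a' /\ M = M').
{ intros a M a' M' E; apply down_list_single_inj, c_inj in E.
  injection E as -> ->; split; reflexivity. }
set (decode (S : Ifin R -> Prop) a M := S (code a M)).
exists { S : Ifin R -> Prop | admissible_cover R (decode S) }, (@proj1_sig _ _),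
  (fun i => decode (proj1_sig i)); split; [|split].
- intros [S HS] [S' HS'] E; simpl in E; subst S'; f_equal; apply proof_irrelevance.
- intros [S HS]; exact HS.
- intros P b b_least x x_sep.
  set (S q := exists a M, code a M = q /\ jle P (x a) (jL P b x M)).
  assert (decode_S : forall a M, decode S a M <-> jle P (x a) (jL P b x M)).
  { intros a M; unfold decode, S; split; [|eauto].
    intros [a' [M' [E H]]]; apply code_inj in E as [-> ->]; exact H. }
  assert (adm : admissible_cover R (decode S)).
  { destruct (admissible_join_cover R P b x b_least x_sep) as [H1 H2].
    split; intros a L H; [apply decode_S|apply H2, decode_S]; auto. }
  exists (exist _ S adm), x; exact decode_S.
Qed.

Lemma cover_family_exists (R : Poset) :
  exists (I : Type) (idx : I -> (Ifin R -> Prop)) (rel : I -> R -> list R -> Prop),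
    injective idx /\ cover_family R I rel.
Proof.
destruct (classic (exists e : nat -> R, injective e)) as [[e e_inj]|finite].
- exact (infinite_cover_family R e e_inj).
- exists unit, (fun _ _ => True), (fun _ => below_some R); split.
  + intros [] [] _; reflexivity.
  + apply locally_finite_cover_family; intro r; apply NNPP; intro unlisted.
    exact (finite (unlisted_nat_injection _ unlisted)).
Qed.

Theorem theorem1p4 (R : Poset) :
  exists (I : Type) (idx : I -> (Ifin R -> Prop)),
    injective idx /\
    exists B : I -> JSL,
      forall P : JSL, has_least P ->
        ((~ exists f : Jid (Ifin_le R) -> Jid (jle P),
              injective f /\ preserves_all_joins Jle Jle f)
         <->
         (forall i : I, ~ exists g : B i -> P, jsl_embedding g)).
Proof.
destruct (cover_family_exists R) as (I & idx & rel & idx_inj & rel_adm & rel_cover).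
exists I, idx; split; [exact idx_inj|].
exists (fun i => cover_jsl (rel i)); intros P [b b_least].
rewrite (join_embedding_iff_separating R P b b_least); split.
- intros no_sep i emb.
  exact (no_sep (separating_of_cover_embedding R P b (rel i) b_least (rel_adm i) emb)).
- intros no_emb [x x_sep].
  destruct (rel_cover P b b_least x x_sep) as (i & x' & rel_x').
  apply (no_emb i); exists (realize (rel i) P b x'); exact (realize_embedding (rel i) P b x' b_least rel_x').
Qed.
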